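(* Let $R>1$ and let $f$ be a circular tractrix with parameter $R$ and constants $c_1,c_2$ with $c_1^2+c_2^2=1$. Then $f'(t)=0$ if and only if $t=0$, and both arcs $f|_{[0,\infty)}$ and $f|_{(-\infty,0]}$ have infinite length.
   Context: Fix $R>1$, $\lambda=\frac{\sqrt{R^2-1}}{R}$, and real constants $c_1,c_2$ with $c_1^2+c_2^2=1$. The circular tractrix is $f(t)=\big(\xi_1\cos\tfrac tR+\xi_2\sin\tfrac tR,\ -\xi_2\cos\tfrac tR+\xi_1\sin\tfrac tR,\ \xi_3\big)$, $t\in\mathbb R$, with $\xi_1=\frac{(R-\frac1R)\cosh\lambda t}{\frac{c_1}{R}+\cosh\lambda t}$, $\xi_2=\frac{\lambda\sinh\lambda t}{\frac{c_1}{R}+\cosh\lambda t}$, $\xi_3=\frac{\lambda c_2}{\frac{c_1}{R}+\cosh\lambda t}$. *)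

From Stdlib Require Import Reals.
From Coquelicot Require Import Coquelicot.
Open Scope R_scope.

Definition lam (Rr : R) : R := sqrt (Rr ^ 2 - 1) / Rr.

Definition den (Rr c1 t : R) : R := c1 / Rr + cosh (lam Rr * t).

Definition xi1 (Rr c1 t : R) : R := (Rr - 1 / Rr) * cosh (lam Rr * t) / den Rr c1 t.
Definition xi2 (Rr c1 t : R) : R := lam Rr * sinh (lam Rr * t) / den Rr c1 t.
Definition xi3 (Rr c1 c2 t : R) : R := lam Rr * c2 / den Rr c1 t.

Definition trx1 (Rr c1 t : R) : R :=
  xi1 Rr c1 t * cos (t / Rr) + xi2 Rr c1 t * sin (t / Rr).
Definition trx2 (Rr c1 t : R) : R :=
  - xi2 Rr c1 t * cos (t / Rr) + xi1 Rr c1 t * sin (t / Rr).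
Definition trx3 (Rr c1 c2 t : R) : R := xi3 Rr c1 c2 t.

Definition speed (Rr c1 c2 t : R) : R :=
  sqrt (Derive (trx1 Rr c1) t ^ 2 + Derive (trx2 Rr c1) t ^ 2
        + Derive (trx3 Rr c1 c2) t ^ 2).

Definition arc_length (Rr c1 c2 a b : R) : R := RInt (speed Rr c1 c2) a b.

From Stdlib Require Import Reals Lra Psatz.
From Coquelicot Require Import Coquelicot.
Open Scope R_scope.

(* In the frame rotating with angular velocity 1/R the planar part of the tractrix is
   (xi1, -xi2), so its velocity has the norm of (xi1' + xi2/R, xi1/R - xi2').  Because
   (R - 1/R)/R = lambda^2, the second component simplifies to lambda^2 sinh^2(lambda t)/D^2
   with D = c1/R + cosh(lambda t) > 0.  It vanishes only at t = 0, where the whole velocity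
   vanishes as every other component carries a factor sinh(lambda t); and it tends to
   lambda^2 as |t| grows, so the speed stays above lambda^2/2 far out and both arcs have
   infinite length. *)

Lemma cosh_sqr_sub_sinh_sqr x : cosh x ^ 2 - sinh x ^ 2 = 1.
Proof. unfold cosh, sinh. rewrite exp_Ropp. field. apply Rgt_not_eq, exp_pos. Qed.

Lemma cosh_ge_1 x : 1 <= cosh x.
Proof.
  pose proof (cosh_sqr_sub_sinh_sqr x).
  assert (0 < cosh x) by (unfold cosh; pose proof (exp_pos x); pose proof (exp_pos (- x)); lra).
  nra.
Qed.

Lemma cosh_ge_abs x : (1 + Rabs x) / 2 <= cosh x.
Proof.
  unfold cosh. pose proof (exp_pos x). pose proof (exp_pos (- x)).
  destruct (Rle_or_lt 0 x).
  - rewrite Rabs_right by lra. pose proof (exp_ineq1_le x). lra.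
  - rewrite Rabs_left by lra. pose proof (exp_ineq1_le (- x)). lra.
Qed.

Lemma sinh_eq_0 x : sinh x = 0 -> x = 0.
Proof.
  intros H. pose proof (arcsinh_sinh 0) as E. rewrite sinh_0 in E.
  now rewrite <- (arcsinh_sinh x), H.
Qed.

Lemma is_derive_cosh_lin (l t : R) :
  is_derive (fun s => cosh (l * s)) t (l * sinh (l * t)).
Proof. unfold cosh, sinh. auto_derive; [easy | field]. Qed.

Lemma is_derive_sinh_lin (l t : R) :
  is_derive (fun s => sinh (l * s)) t (l * cosh (l * t)).
Proof. unfold cosh, sinh. auto_derive; [easy | field]. Qed.

Lemma rotation_norm2 a b th :
  (a * cos th - b * sin th) ^ 2 + (a * sin th + b * cos th) ^ 2 = a ^ 2 + b ^ 2.
Proof.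
  pose proof (sin2_cos2 th) as E. unfold Rsqr in E.
  transitivity ((a ^ 2 + b ^ 2) * (sin th * sin th + cos th * cos th)); [ring | rewrite E; ring].
Qed.

Lemma is_derive_rotating_frame (w : R) (a b : R -> R) (t da db : R) :
  is_derive a t da -> is_derive b t db ->
  is_derive (fun s => a s * cos (s * w) - b s * sin (s * w)) t
    ((da - w * b t) * cos (t * w) - (db + w * a t) * sin (t * w)) /\
  is_derive (fun s => a s * sin (s * w) + b s * cos (s * w)) t
    ((da - w * b t) * sin (t * w) + (db + w * a t) * cos (t * w)).
Proof.
  intros Ha Hb.
  assert (Da : Derive (fun s => a s) t = da) by exact (is_derive_unique _ _ _ Ha).
  assert (Db : Derive (fun s => b s) t = db) by exact (is_derive_unique _ _ _ Hb).
  split; (auto_derive; [repeat split; eexists; eassumption | rewrite Da, Db; ring]).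
Qed.

Lemma RInt_ge_const (f : R -> R) (a b c : R) :
  a <= b -> ex_RInt f a b -> (forall x, a < x < b -> c <= f x) ->
  (b - a) * c <= RInt f a b.
Proof.
  intros Hab Hf Hc.
  rewrite <- (RInt_const (V := R_CompleteNormedModule)).
  apply RInt_le; auto. apply ex_RInt_const.
Qed.

Lemma RInt_comp_opp (f : R -> R) (a b : R) :
  ex_RInt f (- b) (- a) -> RInt (fun y => f (- y)) a b = RInt f (- b) (- a).
Proof.
  intros Hf. apply is_RInt_unique.
  pose proof (RInt_correct _ _ _ (ex_RInt_swap _ _ _ Hf)) as H.
  apply is_RInt_opp, is_RInt_comp_opp in H.
  rewrite <- opp_RInt_swap by (apply ex_RInt_swap, Hf).
  eapply is_RInt_ext; [| exact H]. intros y _. apply opp_opp.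
Qed.

Lemma RInt_unbounded_right (f : R -> R) (t0 c : R) :
  (forall a b, ex_RInt f a b) -> (forall x, 0 <= f x) -> 0 < c ->
  (forall x, t0 <= x -> c <= f x) ->
  forall M, exists T, 0 < T /\ M < RInt f 0 T.
Proof.
  intros Hf Hpos Hc Hfar M.
  set (t1 := Rmax 0 t0). set (T := t1 + Rabs M / c + 1).
  assert (Ht1 : 0 <= t1 /\ t0 <= t1) by (split; [apply Rmax_l | apply Rmax_r]).
  assert (HM : 0 <= Rabs M / c) by (apply Rdiv_le_0_compat; [apply Rabs_pos | exact Hc]).
  exists T. split; [unfold T; lra |].
  rewrite <- (RInt_Chasles f 0 t1 T) by apply Hf. change (plus ?x ?y) with (x + y).
  assert (Hnear : 0 <= RInt f 0 t1) by (apply RInt_ge_0; auto; lra).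
  assert (Hfar' : (T - t1) * c <= RInt f t1 T)
    by (apply RInt_ge_const; auto; [unfold T; lra | intros; apply Hfar; lra]).
  replace ((T - t1) * c) with (Rabs M + c) in Hfar' by (unfold T; field; lra).
  pose proof (Rle_abs M). lra.
Qed.

Lemma RInt_unbounded_left (f : R -> R) (t0 c : R) :
  (forall a b, ex_RInt f a b) -> (forall x, 0 <= f x) -> 0 < c ->
  (forall x, x <= - t0 -> c <= f x) ->
  forall M, exists T, 0 < T /\ M < RInt f (- T) 0.
Proof.
  intros Hf Hpos Hc Hfar M.
  destruct (RInt_unbounded_right (fun y => f (- y)) t0 c) with (M := M) as [T [HT HM]]; auto.
  - intros a b. apply (ex_RInt_ext (fun y => opp (opp (f (- y))))); [intros; apply opp_opp |].
    exact (ex_RInt_comp_opp (fun x => opp (f x)) a b (ex_RInt_opp _ _ _ (Hf _ _))).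
  - intros x Hx. apply Hfar. lra.
  - exists T. split; [exact HT |]. rewrite RInt_comp_opp, Ropp_0 in HM by apply Hf. exact HM.
Qed.

Lemma lam_pos (Rr : R) : 1 < Rr -> 0 < lam Rr.
Proof. intros hR. unfold lam. apply Rdiv_lt_0_compat; [apply sqrt_lt_R0; nra | lra]. Qed.

Lemma lam_sqr (Rr : R) : 1 <= Rr -> lam Rr ^ 2 = (Rr - 1 / Rr) / Rr.
Proof.
  intros hR. unfold lam. replace ((sqrt (Rr ^ 2 - 1) / Rr) ^ 2) with (sqrt (Rr ^ 2 - 1) ^ 2 / Rr ^ 2)
    by (field; lra).
  rewrite pow2_sqrt by nra. field. lra.
Qed.

(* Proves [is_derive f x d] from [H : is_derive f x d'], leaving [d' = d] stated over [R]
   (rather than over the carrier of [R_AbsRing]) so that [field] applies. *)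
Ltac derive_from H :=
  refine (eq_ind _ (is_derive _ _) H _ _); match goal with |- ?a = ?b => change (@eq R a b) end.

Section Tractrix.

Variables Rr c1 c2 : R.
Hypothesis hR : 1 < Rr.
Hypothesis hc1 : -1 <= c1 <= 1.

Let C t := cosh (lam Rr * t).
Let S t := sinh (lam Rr * t).
Let D t := den Rr c1 t.

Lemma den_pos t : 0 < D t.
Proof.
  unfold D, den. pose proof (cosh_ge_1 (lam Rr * t)).
  assert (0 < (c1 + Rr) / Rr) by (apply Rdiv_lt_0_compat; lra).
  replace (c1 / Rr) with ((c1 + Rr) / Rr - 1) by (field; lra). lra.
Qed.

Lemma den_le t : D t <= 1 + C t.
Proof.
  unfold D, den, C. assert (0 <= (Rr - c1) / Rr) by (apply Rdiv_le_0_compat; lra).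
  replace (c1 / Rr) with (1 - (Rr - c1) / Rr) by (field; lra). lra.
Qed.

Lemma is_derive_den (t : R) : is_derive (den Rr c1) t (lam Rr * S t).
Proof.
  derive_from (is_derive_plus _ _ t _ _ (is_derive_const (c1 / Rr) t) (is_derive_cosh_lin (lam Rr) t)).
  unfold S. cbn. ring.
Qed.

Definition dxi1 (t : R) := (Rr - 1 / Rr) * lam Rr * S t * (D t - C t) / D t ^ 2.
Definition dxi2 (t : R) := lam Rr ^ 2 * (C t * D t - S t ^ 2) / D t ^ 2.
Definition dxi3 (t : R) := - (lam Rr ^ 2 * c2 * S t) / D t ^ 2.

Lemma is_derive_xi1 (t : R) : is_derive (xi1 Rr c1) t (dxi1 t).
Proof.
  pose proof (den_pos t) as Hd.
  derive_from (is_derive_div _ _ t _ _ (is_derive_scal _ t (Rr - 1 / Rr) _ (is_derive_cosh_lin (lam Rr) t))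
    (is_derive_den t) (Rgt_not_eq _ _ Hd)).
  unfold dxi1, D, C, S in *. field. lra.
Qed.

Lemma is_derive_xi2 (t : R) : is_derive (xi2 Rr c1) t (dxi2 t).
Proof.
  pose proof (den_pos t) as Hd.
  derive_from (is_derive_div _ _ t _ _ (is_derive_scal _ t (lam Rr) _ (is_derive_sinh_lin (lam Rr) t))
    (is_derive_den t) (Rgt_not_eq _ _ Hd)).
  unfold dxi2, D, C, S in *. field. lra.
Qed.

Lemma is_derive_xi3 (t : R) : is_derive (xi3 Rr c1 c2) t (dxi3 t).
Proof.
  pose proof (den_pos t) as Hd.
  derive_from (is_derive_div _ _ t _ _ (is_derive_const (lam Rr * c2) t)
    (is_derive_den t) (Rgt_not_eq _ _ Hd)).
  unfold dxi3, D, S in *. cbn. field. lra.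
Qed.

Definition frame_vel1 (t : R) := dxi1 t + xi2 Rr c1 t / Rr.
Definition frame_vel2 (t : R) := xi1 Rr c1 t / Rr - dxi2 t.

Lemma is_derive_trx (t : R) :
  is_derive (trx1 Rr c1) t (frame_vel1 t * cos (t / Rr) - frame_vel2 t * sin (t / Rr)) /\
  is_derive (trx2 Rr c1) t (frame_vel1 t * sin (t / Rr) + frame_vel2 t * cos (t / Rr)).
Proof.
  destruct (is_derive_rotating_frame (/ Rr) (xi1 Rr c1) (fun s => - xi2 Rr c1 s) t _ _
    (is_derive_xi1 t) (is_derive_opp _ _ _ (is_derive_xi2 t))) as [H1 H2].
  unfold trx1, trx2, frame_vel1, frame_vel2, Rdiv.
  split; eapply is_derive_ext; [| derive_from H1 | | derive_from H2].
  all: try intros s; cbn; ring.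
Qed.

Lemma speed_eq (t : R) :
  speed Rr c1 c2 t = sqrt (frame_vel1 t ^ 2 + frame_vel2 t ^ 2 + dxi3 t ^ 2).
Proof.
  destruct (is_derive_trx t) as [H1 H2].
  unfold speed.
  rewrite (is_derive_unique _ _ _ H1), (is_derive_unique _ _ _ H2),
    (is_derive_unique (trx3 Rr c1 c2) _ _ (is_derive_xi3 t)), rotation_norm2.
  reflexivity.
Qed.

Lemma frame_vel2_eq (t : R) : frame_vel2 t = lam Rr ^ 2 * S t ^ 2 / D t ^ 2.
Proof.
  pose proof (den_pos t) as Hd.
  unfold frame_vel2, dxi2, xi1. rewrite lam_sqr by lra. fold (D t) (C t).
  unfold C, S. field. lra.
Qed.

Lemma frame_vel_0 : frame_vel1 0 = 0 /\ frame_vel2 0 = 0 /\ dxi3 0 = 0.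
Proof.
  assert (HS : S 0 = 0) by (unfold S; rewrite Rmult_0_r; apply sinh_0).
  rewrite frame_vel2_eq. unfold frame_vel1, dxi1, dxi3, xi2. fold (S 0). rewrite HS.
  repeat split; unfold Rdiv; ring.
Qed.

Lemma frame_vel2_eq_0 (t : R) : frame_vel2 t = 0 -> t = 0.
Proof.
  intros HB. rewrite frame_vel2_eq in HB.
  pose proof (den_pos t). pose proof (lam_pos Rr hR).
  assert (HS : S t ^ 2 = 0).
  { replace (S t ^ 2) with (lam Rr ^ 2 * S t ^ 2 / D t ^ 2 * (D t ^ 2 / lam Rr ^ 2))
      by (field; lra).
    rewrite HB. ring. }
  assert (Hl : lam Rr * t = 0) by (apply sinh_eq_0; fold (S t); nra).
  nra.
Qed.

Lemma Derive_trx_eq_0 (t : R) :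
  (Derive (trx1 Rr c1) t = 0 /\ Derive (trx2 Rr c1) t = 0
   /\ Derive (trx3 Rr c1 c2) t = 0) <-> t = 0.
Proof.
  destruct (is_derive_trx t) as [H1 H2].
  rewrite (is_derive_unique _ _ _ H1), (is_derive_unique _ _ _ H2),
    (is_derive_unique (trx3 Rr c1 c2) _ _ (is_derive_xi3 t)).
  split.
  - intros [E1 [E2 _]]. apply frame_vel2_eq_0.
    pose proof (rotation_norm2 (frame_vel1 t) (frame_vel2 t) (t / Rr)) as N.
    rewrite E1, E2 in N. nra.
  - intros ->. destruct frame_vel_0 as [-> [-> ->]]. repeat split; ring.
Qed.

Lemma speed_ge_far (t : R) :
  5 / lam Rr <= Rabs t -> lam Rr ^ 2 / 2 <= speed Rr c1 c2 t.
Proof.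
  intros Ht. pose proof (lam_pos Rr hR) as Hl.
  assert (Hlt : 5 <= Rabs (lam Rr * t)).
  { rewrite Rabs_mult, (Rabs_right (lam Rr)) by lra.
    replace 5 with (lam Rr * (5 / lam Rr)) by (field; lra). nra. }
  assert (HC : 3 <= C t) by (pose proof (cosh_ge_abs (lam Rr * t)); unfold C; lra).
  pose proof (cosh_sqr_sub_sinh_sqr (lam Rr * t)) as HCS. fold (C t) (S t) in HCS.
  pose proof (den_pos t). pose proof (den_le t).
  assert (HB : lam Rr ^ 2 / 2 <= frame_vel2 t).
  { assert (HD : D t ^ 2 <= 2 * S t ^ 2) by nra.
    rewrite frame_vel2_eq. apply (Rmult_le_reg_r (D t ^ 2)); [nra |].
    replace (lam Rr ^ 2 * S t ^ 2 / D t ^ 2 * D t ^ 2) with (lam Rr ^ 2 * S t ^ 2) by (field; lra).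
    pose proof (pow_lt _ 2 Hl). nra. }
  rewrite speed_eq.
  rewrite <- (sqrt_pow2 (frame_vel2 t)) in HB by (pose proof (pow2_ge_0 (lam Rr)); lra).
  eapply Rle_trans; [exact HB |]. apply sqrt_le_1_alt.
  pose proof (pow2_ge_0 (frame_vel1 t)). pose proof (pow2_ge_0 (dxi3 t)). lra.
Qed.

Lemma ex_RInt_speed (a b : R) : ex_RInt (speed Rr c1 c2) a b.
Proof.
  apply (ex_RInt_continuous (V := R_CompleteNormedModule)). intros t _.
  apply (continuous_ext (fun s => sqrt (frame_vel1 s ^ 2 + frame_vel2 s ^ 2 + dxi3 s ^ 2)));
    [intros; symmetry; apply speed_eq |].
  apply continuous_sqrt_comp, (ex_derive_continuous (V := R_NormedModule)).
  pose proof (den_pos t) as Hd.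
  unfold frame_vel1, frame_vel2, dxi1, dxi2, dxi3, xi1, xi2, D, C, S, den in *.
  unfold cosh, sinh in *.
  auto_derive. change (c1 / Rr + (exp (lam Rr * t) + exp (- (lam Rr * t))) * / 2 > 0) in Hd.
  repeat split; nra.
Qed.

End Tractrix.

Theorem mainTheorem2 (Rr c1 c2 : R) (hR : 1 < Rr) (hc : c1 ^ 2 + c2 ^ 2 = 1) :
  (forall t : R,
     (Derive (trx1 Rr c1) t = 0 /\ Derive (trx2 Rr c1) t = 0
      /\ Derive (trx3 Rr c1 c2) t = 0) <-> t = 0)
  /\ (forall M : R, exists T : R, 0 < T /\ M < arc_length Rr c1 c2 0 T)
  /\ (forall M : R, exists T : R, 0 < T /\ M < arc_length Rr c1 c2 (- T) 0).
Proof.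
  assert (hc1 : -1 <= c1 <= 1) by nra.
  assert (Hc : 0 < lam Rr ^ 2 / 2) by (pose proof (pow_lt _ 2 (lam_pos Rr hR)); lra).
  split; [| split].
  - exact (Derive_trx_eq_0 Rr c1 c2 hR hc1).
  - apply (RInt_unbounded_right _ (5 / lam Rr) (lam Rr ^ 2 / 2) (ex_RInt_speed Rr c1 c2 hR hc1));
      [intros; apply sqrt_pos | exact Hc |].
    intros t Ht. apply (speed_ge_far Rr c1 c2 hR hc1). pose proof (Rle_abs t). lra.
  - apply (RInt_unbounded_left _ (5 / lam Rr) (lam Rr ^ 2 / 2) (ex_RInt_speed Rr c1 c2 hR hc1));
      [intros; apply sqrt_pos | exact Hc |].
    intros t Ht. apply (speed_ge_far Rr c1 c2 hR hc1).
    pose proof (Rle_abs (- t)). rewrite Rabs_Ropp in *. lra.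
Qed.
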